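(* Let $m\ge1$ and let $W$ be a B-DMC. For $n\ge1$ let $E[J_n]=\frac{1}{N(n)}\sum_{\mathbf s\in\mathcal S_n}J(W_{\mathbf s})$, and for $n\le0$ let $E[J_n]=J(W)$. Then for every $n\ge1$, with $\mu=N(n-1)/N(n)$ (so $1-\mu=N(n-m)/N(n)$), $$E[J_n]\ \ge\ \mu\,E[J_{n-1}]+(1-\mu)\,E[J_{n-m}],$$ and equality holds only if, for every $\mathbf s=(s_1,\dots,s_n)\in\mathcal S_n$ with $s_n\in\{+,-\}$, one has $J(W_{(s_1,\dots,s_{n-1})})\in\{0,1\}$ or $J(W_{(s_1,\dots,s_{n-m})})\in\{0,1\}$ (where $(s_1,\dots,s_{n-m})$ is the empty string if $n\le m$).
   Context: Fix an integer $m\ge1$. Define integers $N(n)$ by $N(n)=1$ for $1-m\le n\le 0$ and $N(n)=N(n-1)+N(n-m)$ for $n\ge1$; write $\mathbb N_n=\{1,\dots,N(n)\}$ (so $\mathbb N_n=\{1\}$ for $n\le 0$, and $\mathbb N_{n-m}\subseteq\mathbb N_{n-1}$). Define vectors $\mathbf s_n^{(i)}\in\{+,-,\bigstar\}^n$ for $n\ge0$, $i\in\mathbb N_n$, recursively: $\mathbf s_0^{(1)}$ is the empty vector, and for $n\ge1$: $\mathbf s_n^{(j)}=(\mathbf s_{n-1}^{(j)},+)$ and $\mathbf s_n^{(j+N(n-1))}=(\mathbf s_{n-1}^{(j)},-)$ for $j\in\mathbb N_{n-m}$, while $\mathbf s_n^{(j)}=(\mathbf s_{n-1}^{(j)},\bigstar)$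 for $j\in\mathbb N_{n-1}\setminus\mathbb N_{n-m}$. Let $\mathcal S_n=\{\mathbf s_n^{(i)}:i\in\mathbb N_n\}$ for $n\ge1$. A B-DMC $V$ is a channel with input alphabet $\{0,1\}$, a finite output alphabet $\mathcal Y$ and transition probabilities $V(y|x)$. With base-2 logarithms and uniform input: $I(V)=\sum_{y}\sum_{x}\frac12V(y|x)\log\frac{V(y|x)}{\frac12V(y|0)+\frac12V(y|1)}$, $Z(V)=\sum_y\sqrt{V(y|0)V(y|1)}$, $J(V)=\log\frac{2}{1+Z(V)}$. For B-DMCs $V':\{0,1\}\to\mathcal Y_1$ and $V'':\{0,1\}\to\mathcal Y_2$ define $V'\boxminus V'':\{0,1\}\to\mathcal Y_1\times\mathcal Y_2$ by $(V'\boxminus V'')(y_1,y_2|x_1)=\sum_{x_2\in\{0,1\}}\frac12V'(y_1|x_1\oplus x_2)V''(y_2|x_2)$, and $V'\boxplus V'':\{0,1\}\to\mathcal Y_1\times\mathcal Y_2\times\{0,1\}$ by $(V'\boxplus V'')(y_1,y_2,x_1|x_2)=\frac12V'(y_1|x_1\oplus x_2)V''(y_2|x_2)$. Fix a B-DMC $W$. For every finite string $\mathbf t=(t_1,\dots,t_n)\in\{+,-,\bigstar\}^n$, $n\ge0$, define a B-DMC $W_{\mathbf t}$ recursively: $W_{\emptyset}=W$ for the empty string; for $n\ge1$ let $\mathbf t'=(t_1,\dots,t_{n-1})$ and $\mathbf t''=(t_1,\dots,t_{n-m})$ (the empty string if $n\le m$); then $W_{\mathbf t}=W_{\mathbf t''}\boxplus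 W_{\mathbf t'}$ if $t_n=+$, $W_{\mathbf t}=W_{\mathbf t''}\boxminus W_{\mathbf t'}$ if $t_n=-$, and $W_{\mathbf t}=W_{\mathbf t'}$ if $t_n=\bigstar$. *)

From Stdlib Require Import Reals List Arith.
Import ListNotations.
Open Scope R_scope.

(* A B-DMC with input {0,1} and finite output alphabet {0,..,k-1} is
   represented by the list of its output columns: the y-th entry is
   the pair (V(y|0), V(y|1)). *)
Definition chan := list (R * R).

Definition valid_chan (V : chan) : Prop :=
  Forall (fun p => 0 <= fst p /\ 0 <= snd p) V /\
  fold_right Rplus 0 (map fst V) = 1 /\
  fold_right Rplus 0 (map snd V) = 1.

Definition log2 (x : R) : R := ln x / ln 2.

Definition Zb (V : chan) : R :=
  fold_right Rplus 0 (map (fun p => sqrt (fst p * snd p)) V).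

Definition Jc (V : chan) : R := log2 (2 / (1 + Zb V)).

(* V' ⊟ V'' : output (y1,y2), input x1:
   (y1,y2|x1) = sum_{x2} 1/2 V'(y1|x1 xor x2) V''(y2|x2) *)
Definition boxminus (V1 V2 : chan) : chan :=
  flat_map (fun a =>
    map (fun b =>
      (/2 * (fst a * fst b + snd a * snd b),
       /2 * (snd a * fst b + fst a * snd b))) V2) V1.

(* V' ⊞ V'' : output (y1,y2,x1), input x2:
   (y1,y2,x1|x2) = 1/2 V'(y1|x1 xor x2) V''(y2|x2) *)
Definition boxplus (V1 V2 : chan) : chan :=
  flat_map (fun a =>
    flat_map (fun b =>
      [ (/2 * (fst a * fst b), /2 * (snd a * snd b))      (* x1 = 0 *)
      ; (/2 * (snd a * fst b), /2 * (fst a * snd b)) ]    (* x1 = 1 *)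
    ) V2) V1.

Inductive sign := Plus | Minus | Star.

(* W_t, defined by recursion on the length of t (fuel = length t):
   t' = t without its last symbol, t'' = first (n-m) symbols
   (empty if n <= m, via truncated subtraction). *)
Fixpoint Wfuel (m : nat) (W : chan) (fuel : nat) (t : list sign) : chan :=
  match fuel with
  | O => W
  | S f =>
    match t with
    | [] => W
    | _ =>
      let t' := removelast t in
      let t'' := firstn (length t - m)%nat t in
      match last t Star with
      | Plus => boxplus (Wfuel m W f t'') (Wfuel m W f t')
      | Minus => boxminus (Wfuel m W f t'') (Wfuel m W f t')
      | Star => Wfuel m W f t'
      end
    end
  end.

Definition Wt (m : nat) (W : chan) (t : list sign) : chan :=
  Wfuel m W (length t) t.

(* N(n), n : nat; N(n) = 1 for n <= 0 is encoded by truncated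
   subtraction: N(n-m) with n <= m is N 0 = 1. *)
Fixpoint Nfuel (m : nat) (fuel n : nat) : nat :=
  match fuel with
  | O => 1
  | S f =>
    match n with
    | O => 1
    | S k => (Nfuel m f k + Nfuel m f (S k - m))%nat
    end
  end.

Definition NN (m n : nat) : nat := Nfuel m n n.

(* The list [s_n^(1); ...; s_n^(N(n))] of the recursively defined
   vectors; S_n is the set of its elements. *)
Fixpoint Sseq (m n : nat) : list (list sign) :=
  match n with
  | O => [ [] ]
  | S k =>
    let p := Sseq m k in
    let c := NN m (S k - m) in
    map (fun s => s ++ [Plus]) (firstn c p) ++
    map (fun s => s ++ [Star]) (skipn c p) ++
    map (fun s => s ++ [Minus]) (firstn c p)
  end.

(* E[J_n]; E[J_n] = J(W) for n <= 0 (here: n = 0, with n-m truncated). *)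
Definition EJ (m : nat) (W : chan) (n : nat) : R :=
  match n with
  | O => Jc W
  | _ => / INR (NN m n) *
         fold_right Rplus 0 (map (fun s => Jc (Wt m W s)) (Sseq m n))
  end.

From Stdlib Require Import Reals List Arith Lra Lia.
Import ListNotations.
Open Scope R_scope.

(* Writing a = Z(V'), b = Z(V''), the Bhattacharyya parameter is multiplicative
   under ⊞ and satisfies Z(V' ⊟ V'') <= a + b - ab.  Since
   (1 + a)(1 + b) - (1 + ab)(1 + a + b - ab) = ab(1 - a)(1 - b),
   the gain J(V' ⊞ V'') + J(V' ⊟ V'') - J(V') - J(V'') is nonnegative, and it
   vanishes only if a or b lies in {0, 1}.
   By construction, the first N(n-m) vectors of S_(n-1), truncated to length
   n-m, are exactly S_(n-m).  Hence
   N(n) E[J_n] - N(n-1) E[J_(n-1)] - N(n-m) E[J_(n-m)] is the total gain of the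
   pairs split into a + and a - child, and N(n) = N(n-1) + N(n-m) turns this
   into the claimed convex-combination bound. *)

Notation sumR := (fold_right Rplus 0).

Lemma sumR_app l1 l2 : sumR (l1 ++ l2) = sumR l1 + sumR l2.
Proof. induction l1 as [|x l1 IH]; simpl; [ring | rewrite IH; ring]. Qed.

Lemma sumR_flat_map {A B} (f : B -> R) (g : A -> list B) l :
  sumR (map f (flat_map g l)) = sumR (map (fun a => sumR (map f (g a))) l).
Proof. induction l as [|a l IH]; simpl; auto. rewrite map_app, sumR_app, IH; auto. Qed.

Lemma sumR_map_ext_in {A} (f g : A -> R) l :
  (forall x, In x l -> f x = g x) -> sumR (map f l) = sumR (map g l).
Proof. intros H; f_equal; apply map_ext_in; auto. Qed.

Lemma sumR_map_le {A} (f g : A -> R) l :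
  (forall x, In x l -> f x <= g x) -> sumR (map f l) <= sumR (map g l).
Proof.
  induction l as [|a l IH]; simpl; intros H; [lra|].
  pose proof (H a (or_introl eq_refl)).
  pose proof (IH (fun x Hx => H x (or_intror Hx))). lra.
Qed.

Lemma sumR_map_ge0 {A} (f : A -> R) l :
  (forall x, In x l -> 0 <= f x) -> 0 <= sumR (map f l).
Proof.
  induction l as [|a l IH]; simpl; intros H; [lra|].
  pose proof (H a (or_introl eq_refl)).
  pose proof (IH (fun x Hx => H x (or_intror Hx))). lra.
Qed.

Lemma sumR_map_eq0 {A} (f : A -> R) l :
  (forall x, In x l -> 0 <= f x) -> sumR (map f l) = 0 ->
  forall x, In x l -> f x = 0.
Proof.
  induction l as [|a l IH]; simpl; intros H Hs x Hx; [contradiction|].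
  pose proof (H a (or_introl eq_refl)).
  assert (0 <= sumR (map f l)) by (apply sumR_map_ge0; auto).
  destruct Hx as [<- | Hx]; [lra|]. apply IH; auto; lra.
Qed.

Lemma sumR_map_lin3 {A} (f g1 g2 g3 : A -> R) c1 c2 c3 l :
  (forall x, In x l -> f x = c1 * g1 x + c2 * g2 x + c3 * g3 x) ->
  sumR (map f l) =
  c1 * sumR (map g1 l) + c2 * sumR (map g2 l) + c3 * sumR (map g3 l).
Proof.
  induction l as [|a l IH]; simpl; intros H; [ring|].
  rewrite IH, H by auto. ring.
Qed.

Lemma sqrt_le_of_le_sqr x y : 0 <= y -> x <= y * y -> sqrt x <= y.
Proof. intros Hy H. rewrite <- (sqrt_square y Hy). apply sqrt_le_1_alt, H. Qed.

Lemma sqrt_mul_le_mean x y : 0 <= x -> 0 <= y -> sqrt (x * y) <= /2 * x + /2 * y.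
Proof.
  intros. apply sqrt_le_of_le_sqr; [lra|].
  pose proof (Rle_0_sqr (x - y)). unfold Rsqr in *. nra.
Qed.

(* The right-hand side equals
   1/2 (a-d)^2 bg + 1/2 (b-g)^2 ad + adbg >= 0, and its square exceeds the
   radicand by 1/2 adbg ((a-d)(b-g))^2. *)
Lemma boxminus_column_sqr_le a d b g :
  0 <= a -> 0 <= d -> 0 <= b -> 0 <= g ->
  sqrt (/2 * (a*a*(b*b) + d*d*(g*g)) * (/2 * (d*d*(b*b) + a*a*(g*g)))) <=
  /2 * ((a*a + d*d) * (b*g) + (b*b + g*g) * (a*d)) - (a*d) * (b*g).
Proof.
  intros Ha Hd Hb Hg.
  assert (Had : 0 <= a * d) by (apply Rmult_le_pos; auto).
  assert (Hbg : 0 <= b * g) by (apply Rmult_le_pos; auto).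
  pose proof (Rle_0_sqr (a - d)) as Sad. pose proof (Rle_0_sqr (b - g)) as Sbg.
  pose proof (Rle_0_sqr ((a - d) * (b - g))) as S. unfold Rsqr in *.
  apply sqrt_le_of_le_sqr.
  - assert (0 <= (a-d)*(a-d)*(b*g)) by (apply Rmult_le_pos; auto).
    assert (0 <= (b-g)*(b-g)*(a*d)) by (apply Rmult_le_pos; auto).
    assert (0 <= (a*d)*(b*g)) by (apply Rmult_le_pos; auto).
    nra.
  - match goal with |- ?X <= ?Y * ?Y =>
      assert (HE : Y * Y - X = /2 * ((a*d)*(b*g)) * (((a-d)*(b-g)) * ((a-d)*(b-g))))
        by field end.
    assert (0 <= /2 * ((a*d)*(b*g))) by (apply Rmult_le_pos; [lra | apply Rmult_le_pos; auto]).
    assert (0 <= /2 * ((a*d)*(b*g)) * (((a-d)*(b-g)) * ((a-d)*(b-g))))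
      by (apply Rmult_le_pos; auto).
    lra.
Qed.

Lemma boxminus_column_le al de be ga :
  0 <= al -> 0 <= de -> 0 <= be -> 0 <= ga ->
  sqrt (/2 * (al*be + de*ga) * (/2 * (de*be + al*ga))) <=
  /2 * ((al + de) * sqrt (be*ga) + (be + ga) * sqrt (al*de))
  - sqrt (al*de) * sqrt (be*ga).
Proof.
  intros Hal Hde Hbe Hga.
  rewrite (sqrt_mult al de), (sqrt_mult be ga) by auto.
  pose proof (boxminus_column_sqr_le (sqrt al) (sqrt de) (sqrt be) (sqrt ga)
    (sqrt_pos _) (sqrt_pos _) (sqrt_pos _) (sqrt_pos _)) as H.
  rewrite !sqrt_sqrt in H by auto. exact H.
Qed.

Lemma boxplus_columns_sqrt al de be ga :
  0 <= al -> 0 <= de -> 0 <= be -> 0 <= ga ->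
  sqrt (/2 * (al*be) * (/2 * (de*ga))) + sqrt (/2 * (de*be) * (/2 * (al*ga)))
  = sqrt (al*de) * sqrt (be*ga).
Proof.
  intros Hal Hde Hbe Hga.
  assert (Hx : 0 <= al * de) by (apply Rmult_le_pos; auto).
  assert (Hy : 0 <= be * ga) by (apply Rmult_le_pos; auto).
  set (h := /2 * (sqrt (al*de) * sqrt (be*ga))).
  assert (Hh : 0 <= h) by (unfold h; pose proof (sqrt_pos (al*de));
                           pose proof (sqrt_pos (be*ga)); nra).
  assert (Hhh : h * h = /4 * ((sqrt (al*de) * sqrt (al*de)) * (sqrt (be*ga) * sqrt (be*ga))))
    by (unfold h; field).
  rewrite !sqrt_sqrt in Hhh by auto.
  rewrite (sqrt_lem_1 _ h), (sqrt_lem_1 _ h); auto.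
  1: unfold h; field.
  all: try (rewrite Hhh; field).
  all: repeat apply Rmult_le_pos; auto; lra.
Qed.

Lemma boxplus_valid V1 V2 :
  valid_chan V1 -> valid_chan V2 -> valid_chan (boxplus V1 V2).
Proof.
  intros [F1 [A0 A1]] [F2 [B0 B1]]. rewrite Forall_forall in F1, F2.
  unfold boxplus. split; [|split].
  - rewrite Forall_forall. intros x Hx.
    apply in_flat_map in Hx as [a [Ha Hx]]. apply in_flat_map in Hx as [b [Hb Hx]].
    destruct (F1 a Ha), (F2 b Hb).
    destruct Hx as [<- | [<- | []]]; cbn [fst snd]; split;
      repeat apply Rmult_le_pos; auto; lra.
  - rewrite sumR_flat_map, (sumR_map_lin3 _ fst snd (fun _ => 0) (/2) (/2) 0).
    + rewrite A0, A1. lra.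
    + intros a _. rewrite sumR_flat_map. cbn [map fold_right fst snd].
      rewrite (sumR_map_lin3 _ fst snd (fun _ => 0) (/2 * (fst a + snd a)) 0 0)
        by (intros; ring).
      rewrite B0. ring.
  - rewrite sumR_flat_map, (sumR_map_lin3 _ fst snd (fun _ => 0) (/2) (/2) 0).
    + rewrite A0, A1. lra.
    + intros a _. rewrite sumR_flat_map. cbn [map fold_right fst snd].
      rewrite (sumR_map_lin3 _ fst snd (fun _ => 0) 0 (/2 * (fst a + snd a)) 0)
        by (intros; ring).
      rewrite B1. ring.
Qed.

Lemma boxminus_valid V1 V2 :
  valid_chan V1 -> valid_chan V2 -> valid_chan (boxminus V1 V2).
Proof.
  intros [F1 [A0 A1]] [F2 [B0 B1]]. rewrite Forall_forall in F1, F2.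
  unfold boxminus. split; [|split].
  - rewrite Forall_forall. intros x Hx.
    apply in_flat_map in Hx as [a [Ha Hx]]. apply in_map_iff in Hx as [b [<- Hb]].
    destruct (F1 a Ha), (F2 b Hb).
    cbn [fst snd]; split; apply Rmult_le_pos; try lra;
      apply Rplus_le_le_0_compat; apply Rmult_le_pos; auto.
  - rewrite sumR_flat_map, (sumR_map_lin3 _ fst snd (fun _ => 0) (/2) (/2) 0).
    + rewrite A0, A1. lra.
    + intros a _. rewrite map_map.
      rewrite (sumR_map_lin3 _ fst snd (fun _ => 0) (/2 * fst a) (/2 * snd a) 0)
        by (intros; cbn; ring).
      rewrite B0, B1. ring.
  - rewrite sumR_flat_map, (sumR_map_lin3 _ fst snd (fun _ => 0) (/2) (/2) 0).
    + rewrite A0, A1. lra.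
    + intros a _. rewrite map_map.
      rewrite (sumR_map_lin3 _ fst snd (fun _ => 0) (/2 * snd a) (/2 * fst a) 0)
        by (intros; cbn; ring).
      rewrite B0, B1. ring.
Qed.

Lemma Zb_ge0 V : 0 <= Zb V.
Proof. apply sumR_map_ge0; intros; apply sqrt_pos. Qed.

Lemma Zb_le1 V : valid_chan V -> Zb V <= 1.
Proof.
  intros [F [H0 H1]]. rewrite Forall_forall in F. unfold Zb.
  eapply Rle_trans.
  - apply (sumR_map_le _ (fun p => /2 * fst p + /2 * snd p)).
    intros x Hx; destruct (F x Hx); apply sqrt_mul_le_mean; auto.
  - rewrite (sumR_map_lin3 _ fst snd (fun _ => 0) (/2) (/2) 0) by (intros; ring).
    rewrite H0, H1. lra.
Qed.

Lemma Zb_boxplus V1 V2 :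
  valid_chan V1 -> valid_chan V2 -> Zb (boxplus V1 V2) = Zb V1 * Zb V2.
Proof.
  intros [F1 _] [F2 _]. rewrite Forall_forall in F1, F2.
  unfold Zb at 1, boxplus. rewrite sumR_flat_map.
  rewrite (sumR_map_lin3 _ (fun p => sqrt (fst p * snd p)) (fun _ => 0) (fun _ => 0)
             (Zb V2) 0 0); [unfold Zb; ring|].
  intros a Ha. rewrite sumR_flat_map. cbn [map fold_right fst snd].
  rewrite (sumR_map_lin3 _ (fun p => sqrt (fst p * snd p)) (fun _ => 0) (fun _ => 0)
             (sqrt (fst a * snd a)) 0 0); [unfold Zb; ring|].
  intros b Hb. destruct (F1 a Ha), (F2 b Hb).
  rewrite Rplus_0_r, boxplus_columns_sqrt by auto. ring.
Qed.

Lemma Zb_boxminus_le V1 V2 :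
  valid_chan V1 -> valid_chan V2 ->
  Zb (boxminus V1 V2) <= Zb V1 + Zb V2 - Zb V1 * Zb V2.
Proof.
  intros [F1 [A0 A1]] [F2 [B0 B1]]. rewrite Forall_forall in F1, F2.
  set (z := fun p : R * R => sqrt (fst p * snd p)).
  unfold Zb at 1, boxminus. rewrite sumR_flat_map.
  eapply Rle_trans.
  - apply (sumR_map_le _
      (fun a => (1 - Zb V2) * z a + (/2 * Zb V2) * fst a + (/2 * Zb V2) * snd a)).
    intros a Ha. rewrite map_map.
    eapply Rle_trans.
    + apply (sumR_map_le _ (fun b => (/2 * (fst a + snd a) - z a) * z b
                                     + (/2 * z a) * fst b + (/2 * z a) * snd b)).
      intros b Hb. destruct (F1 a Ha), (F2 b Hb).
      destruct a as [al de], b as [be ga]. unfold z; cbn [fst snd] in *.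
      eapply Rle_trans; [apply boxminus_column_le; auto | right; field].
    + rewrite (sumR_map_lin3 _ z fst snd (/2 * (fst a + snd a) - z a) (/2 * z a) (/2 * z a))
        by reflexivity.
      rewrite B0, B1. right. change (sumR (map z V2)) with (Zb V2). field.
  - rewrite (sumR_map_lin3 _ z fst snd (1 - Zb V2) (/2 * Zb V2) (/2 * Zb V2)) by reflexivity.
    rewrite A0, A1. right. change (sumR (map z V1)) with (Zb V1). field.
Qed.

Lemma ln2_pos : 0 < ln 2.
Proof. pose proof ln_lt_2. lra. Qed.

Lemma Jc_Zb V : Jc V = 1 - ln (1 + Zb V) / ln 2.
Proof.
  pose proof (Zb_ge0 V). pose proof ln2_pos.
  unfold Jc, log2, Rdiv. rewrite ln_mult, ln_Rinv by (try apply Rinv_0_lt_compat; lra).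
  field. lra.
Qed.

Lemma Jc_extremal V : Zb V = 0 \/ Zb V = 1 -> Jc V = 0 \/ Jc V = 1.
Proof.
  pose proof ln2_pos. rewrite Jc_Zb. intros [-> | ->].
  - right. rewrite Rplus_0_r, ln_1. field. lra.
  - left. replace (1 + 1) with 2 by ring. field. lra.
Qed.

Lemma gain_product_le a b z :
  0 <= a <= 1 -> 0 <= b <= 1 -> z <= a + b - a * b ->
  (1 + a * b) * (1 + z) <= (1 + a) * (1 + b) - a * b * ((1 - a) * (1 - b)).
Proof.
  intros Ha Hb Hz.
  apply Rle_trans with ((1 + a * b) * (1 + (a + b - a * b))); [|right; ring].
  apply Rmult_le_compat_l; [|lra].
  pose proof (Rmult_le_pos a b (proj1 Ha) (proj1 Hb)). lra.
Qed.

Lemma ln_gain_ge0 a b z :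
  0 <= a <= 1 -> 0 <= b <= 1 -> 0 <= z <= a + b - a * b ->
  ln ((1 + a * b) * (1 + z)) <= ln ((1 + a) * (1 + b)).
Proof.
  intros Ha Hb Hz.
  pose proof (gain_product_le a b z Ha Hb (proj2 Hz)).
  assert (0 <= a * b * ((1 - a) * (1 - b))).
  { apply Rmult_le_pos; [apply Rmult_le_pos | apply Rmult_le_pos]; lra. }
  assert (0 <= a * b) by (apply Rmult_le_pos; lra).
  destruct (Rle_lt_or_eq_dec ((1 + a * b) * (1 + z)) ((1 + a) * (1 + b))) as [Hlt | ->];
    [lra | | lra].
  left. apply ln_increasing; [apply Rmult_lt_0_compat |]; lra.
Qed.

Lemma ln_gain_lt a b z :
  0 < a < 1 -> 0 < b < 1 -> 0 <= z <= a + b - a * b ->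
  ln ((1 + a * b) * (1 + z)) < ln ((1 + a) * (1 + b)).
Proof.
  intros Ha Hb Hz.
  pose proof (gain_product_le a b z ltac:(lra) ltac:(lra) (proj2 Hz)).
  assert (0 < a * b * ((1 - a) * (1 - b))).
  { apply Rmult_lt_0_compat; [apply Rmult_lt_0_compat | apply Rmult_lt_0_compat]; lra. }
  assert (0 < a * b) by (apply Rmult_lt_0_compat; lra).
  apply ln_increasing; [apply Rmult_lt_0_compat |]; lra.
Qed.

Definition Jgain (V1 V2 : chan) : R :=
  Jc (boxplus V1 V2) + Jc (boxminus V1 V2) - Jc V1 - Jc V2.

Lemma Jgain_ln V1 V2 : valid_chan V1 -> valid_chan V2 ->
  Jgain V1 V2 =
  (ln ((1 + Zb V1) * (1 + Zb V2))
   - ln ((1 + Zb V1 * Zb V2) * (1 + Zb (boxminus V1 V2)))) / ln 2.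
Proof.
  intros H1 H2. unfold Jgain. rewrite !Jc_Zb, Zb_boxplus by auto.
  pose proof (Zb_ge0 V1). pose proof (Zb_ge0 V2). pose proof (Zb_ge0 (boxminus V1 V2)).
  pose proof (Rmult_le_pos _ _ (Zb_ge0 V1) (Zb_ge0 V2)). pose proof ln2_pos.
  rewrite !ln_mult by lra. field. lra.
Qed.

Section Gain.
Variables V1 V2 : chan.
Hypotheses (H1 : valid_chan V1) (H2 : valid_chan V2).

Let Zbox_bounds : 0 <= Zb (boxminus V1 V2) <= Zb V1 + Zb V2 - Zb V1 * Zb V2.
Proof. split; [apply Zb_ge0 | apply Zb_boxminus_le; auto]. Qed.

Lemma Jgain_ge0 : 0 <= Jgain V1 V2.
Proof.
  rewrite Jgain_ln by auto. unfold Rdiv.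
  apply Rmult_le_pos; [| left; apply Rinv_0_lt_compat, ln2_pos].
  pose proof (ln_gain_ge0 _ _ _ (conj (Zb_ge0 V1) (Zb_le1 V1 H1))
                (conj (Zb_ge0 V2) (Zb_le1 V2 H2)) Zbox_bounds).
  lra.
Qed.

Lemma Jgain_eq0 : Jgain V1 V2 = 0 ->
  (Jc V1 = 0 \/ Jc V1 = 1) \/ (Jc V2 = 0 \/ Jc V2 = 1).
Proof.
  intros H0.
  pose proof (Zb_ge0 V1). pose proof (Zb_le1 V1 H1).
  pose proof (Zb_ge0 V2). pose proof (Zb_le1 V2 H2).
  destruct (Req_dec (Zb V1) 0); [left; apply Jc_extremal; auto|].
  destruct (Req_dec (Zb V1) 1); [left; apply Jc_extremal; auto|].
  destruct (Req_dec (Zb V2) 0); [right; apply Jc_extremal; auto|].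
  destruct (Req_dec (Zb V2) 1); [right; apply Jc_extremal; auto|].
  exfalso. rewrite Jgain_ln in H0 by auto.
  pose proof (ln_gain_lt (Zb V1) (Zb V2) _ ltac:(lra) ltac:(lra) Zbox_bounds).
  pose proof ln2_pos.
  apply (Rmult_eq_compat_r (ln 2)) in H0. unfold Rdiv in H0.
  rewrite Rmult_assoc, Rinv_l, Rmult_0_l in H0 by lra. lra.
Qed.

End Gain.

Lemma In_firstn {A} (x : A) n l : In x (firstn n l) -> In x l.
Proof. intros H. rewrite <- (firstn_skipn n l). apply in_or_app; auto. Qed.

Lemma In_skipn {A} (x : A) n l : In x (skipn n l) -> In x l.
Proof. intros H. rewrite <- (firstn_skipn n l). apply in_or_app; auto. Qed.

Lemma firstn_app_le {A} j (s t : list A) :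
  (j <= length s)%nat -> firstn j (s ++ t) = firstn j s.
Proof.
  intros H. rewrite firstn_app. replace (j - length s)%nat with 0%nat by lia.
  apply app_nil_r.
Qed.

Lemma Nfuel_ge1 m f n : (1 <= Nfuel m f n)%nat.
Proof. revert n; induction f; intros [|n]; simpl; auto. pose proof (IHf n). lia. Qed.

Lemma Nfuel_irrelevance m : (1 <= m)%nat -> forall f1 f2 n,
  (n <= f1)%nat -> (n <= f2)%nat -> Nfuel m f1 n = Nfuel m f2 n.
Proof.
  intros Hm. induction f1 as [|f1 IH]; intros [|f2] [|n] H1 H2; try lia; try reflexivity.
  cbn [Nfuel]. rewrite (IH f2 n), (IH f2 (S n - m)%nat) by lia. reflexivity.
Qed.

Lemma NN_ge1 m k : (1 <= NN m k)%nat.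
Proof. apply Nfuel_ge1. Qed.

Lemma NN_succ m k : (1 <= m)%nat -> NN m (S k) = (NN m k + NN m (S k - m))%nat.
Proof.
  intros Hm. unfold NN. cbn [Nfuel].
  rewrite (Nfuel_irrelevance m Hm k (S k - m) (S k - m)) by lia. reflexivity.
Qed.

Lemma NN_le m j k : (1 <= m)%nat -> (j <= k)%nat -> (NN m j <= NN m k)%nat.
Proof. intros Hm H. induction H; [lia|]. rewrite NN_succ by auto. lia. Qed.

Lemma Sseq_succ m k : Sseq m (S k) =
  map (fun s => s ++ [Plus]) (firstn (NN m (S k - m)) (Sseq m k)) ++
  map (fun s => s ++ [Star]) (skipn (NN m (S k - m)) (Sseq m k)) ++
  map (fun s => s ++ [Minus]) (firstn (NN m (S k - m)) (Sseq m k)).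
Proof. reflexivity. Qed.

Lemma length_Sseq m k : (1 <= m)%nat -> length (Sseq m k) = NN m k.
Proof.
  intros Hm. induction k as [|k IH]; [reflexivity|].
  rewrite Sseq_succ, !length_app, !length_map, !length_firstn, length_skipn, IH,
    NN_succ by auto.
  pose proof (NN_le m (S k - m) k Hm ltac:(lia)). lia.
Qed.

Lemma Sseq_length_in m k s : In s (Sseq m k) -> length s = k.
Proof.
  revert s; induction k as [|k IH]; intros s H.
  - destruct H as [<- | []]; reflexivity.
  - rewrite Sseq_succ in H.
    apply in_app_or in H as [H | H]; [| apply in_app_or in H as [H | H]];
      apply in_map_iff in H as [s0 [<- H0]];
      rewrite length_app, (IH s0); simpl; try lia;
      eauto using In_firstn, In_skipn.
Qed.

Lemma Sseq_succ_split_in m k s : In s (Sseq m (S k)) -> last s Star <> Star ->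
  In (removelast s) (firstn (NN m (S k - m)) (Sseq m k)).
Proof.
  rewrite Sseq_succ. intros H Hlast.
  apply in_app_or in H as [H | H]; [| apply in_app_or in H as [H | H]];
    apply in_map_iff in H as [s0 [<- H0]];
    rewrite ?removelast_last; auto.
  rewrite last_last in Hlast. congruence.
Qed.

(* The + and ★ blocks of S_(k+1) list S_k in order, with one symbol appended;
   hence the first N(j) vectors truncated to length j do not change as k
   grows. *)
Lemma Sseq_prefix m j d : (1 <= m)%nat ->
  firstn (NN m j) (map (firstn j) (Sseq m (j + d))) = Sseq m j.
Proof.
  intros Hm. induction d as [|d IH].
  - rewrite Nat.add_0_r, (map_ext_in _ (fun s => s)), map_id,
      <- (length_Sseq m j Hm), firstn_all; [reflexivity|].
    intros s Hs. rewrite <- (Sseq_length_in m j s Hs) at 1. apply firstn_all.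
  - rewrite Nat.add_succ_r, Sseq_succ.
    set (p := Sseq m (j + d)). set (c := NN m (S (j + d) - m)).
    assert (Hp : forall s, In s p -> length s = (j + d)%nat)
      by (intros; eapply Sseq_length_in; eauto).
    rewrite !map_app, !map_map.
    rewrite (map_ext_in (fun x => firstn j (x ++ [Plus])) (firstn j))
      by (intros s Hs; apply firstn_app_le; rewrite (Hp s) by eauto using In_firstn; lia).
    rewrite (map_ext_in (fun x => firstn j (x ++ [Star])) (firstn j))
      by (intros s Hs; apply firstn_app_le; rewrite (Hp s) by eauto using In_skipn; lia).
    rewrite app_assoc, <- map_app, firstn_skipn, firstn_app_le; [exact IH|].
    rewrite length_map. unfold p. rewrite length_Sseq by auto. apply NN_le; auto; lia.
Qed.

Lemma Wfuel_succ m W f t : t <> [] -> Wfuel m W (S f) t =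
  match last t Star with
  | Plus => boxplus (Wfuel m W f (firstn (length t - m) t)) (Wfuel m W f (removelast t))
  | Minus => boxminus (Wfuel m W f (firstn (length t - m) t)) (Wfuel m W f (removelast t))
  | Star => Wfuel m W f (removelast t)
  end.
Proof. destruct t; [congruence | reflexivity]. Qed.

Lemma Wfuel_irrelevance m W : (1 <= m)%nat -> forall f1 f2 t,
  (length t <= f1)%nat -> (length t <= f2)%nat -> Wfuel m W f1 t = Wfuel m W f2 t.
Proof.
  intros Hm. induction f1 as [|f1 IH]; intros [|f2] [|x t] H1 H2; cbn in H1, H2;
    try lia; try reflexivity.
  rewrite !Wfuel_succ by discriminate.
  assert (Hr : length (removelast (x :: t)) = length t)
    by (rewrite removelast_firstn_len, length_firstn; cbn [length]; lia).
  assert (Hf : (length (firstn (length (x :: t) - m) (x :: t)) <= length t)%nat)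
    by (rewrite length_firstn; cbn [length]; lia).
  rewrite (IH f2 (removelast (x :: t))), (IH f2 (firstn _ (x :: t))) by lia.
  reflexivity.
Qed.

Lemma Wt_rcons m W s x : (1 <= m)%nat -> Wt m W (s ++ [x]) =
  match x with
  | Plus => boxplus (Wt m W (firstn (S (length s) - m) s)) (Wt m W s)
  | Minus => boxminus (Wt m W (firstn (S (length s) - m) s)) (Wt m W s)
  | Star => Wt m W s
  end.
Proof.
  intros Hm. unfold Wt at 1.
  assert (HL : length (s ++ [x]) = S (length s)) by (rewrite length_app; cbn; lia).
  rewrite HL, Wfuel_succ by (destruct s; discriminate).
  rewrite HL, last_last, removelast_last, firstn_app_le by lia.
  assert (HF : Wfuel m W (length s) (firstn (S (length s) - m) s)
               = Wt m W (firstn (S (length s) - m) s))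
    by (apply Wfuel_irrelevance; rewrite ?length_firstn; lia).
  destruct x; rewrite ?HF; reflexivity.
Qed.

Lemma Wt_valid m W t : valid_chan W -> valid_chan (Wt m W t).
Proof.
  intros HW. unfold Wt. generalize (length t) as f. intros f. revert t.
  induction f as [|f IH]; intros [|x t]; try exact HW.
  rewrite Wfuel_succ by discriminate.
  destruct (last _ _); auto using boxplus_valid, boxminus_valid.
Qed.

Lemma sumR_Sseq_Jc m W k :
  sumR (map (fun s => Jc (Wt m W s)) (Sseq m k)) = INR (NN m k) * EJ m W k.
Proof.
  destruct k as [|k]; cbn [EJ].
  - cbn. ring.
  - field. apply not_0_INR. pose proof (NN_ge1 m (S k)). lia.
Qed.

(* The gain of the vectors of S_n that are split into a + and a - child. *)
Definition split_gain (m : nat) (W : chan) (n : nat) : R :=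
  sumR (map (fun s => Jgain (Wt m W (firstn (S n - m) s)) (Wt m W s))
            (firstn (NN m (S n - m)) (Sseq m n))).

Lemma split_gain_ge0 m W n : valid_chan W -> 0 <= split_gain m W n.
Proof. intros HW. apply sumR_map_ge0. intros. apply Jgain_ge0; apply Wt_valid, HW. Qed.

Lemma NN_EJ_succ m W n : (1 <= m)%nat ->
  INR (NN m (S n)) * EJ m W (S n) =
  INR (NN m n) * EJ m W n + INR (NN m (S n - m)) * EJ m W (S n - m)
  + split_gain m W n.
Proof.
  intros Hm. unfold split_gain. rewrite <- !sumR_Sseq_Jc.
  set (j := (S n - m)%nat). set (c := NN m j). set (p := Sseq m n).
  set (J := fun s => Jc (Wt m W s)).
  set (Jj := fun s => Jc (Wt m W (firstn j s))).
  set (Jp := fun s => Jc (boxplus (Wt m W (firstn j s)) (Wt m W s))).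
  set (Jm := fun s => Jc (boxminus (Wt m W (firstn j s)) (Wt m W s))).
  assert (Hlen : forall s, In s (firstn c p) -> length s = n)
    by (intros s Hs; apply (Sseq_length_in m), (In_firstn _ c); auto).
  assert (Hnew : sumR (map J (Sseq m (S n))) =
                 sumR (map Jp (firstn c p)) + sumR (map J (skipn c p))
                 + sumR (map Jm (firstn c p))).
  { rewrite Sseq_succ. fold j c p.
    rewrite !map_app, !sumR_app, !map_map, Rplus_assoc. f_equal; [|f_equal];
      apply sumR_map_ext_in; intros s Hs; unfold J; rewrite Wt_rcons by auto;
      try rewrite Hlen by auto; reflexivity. }
  assert (Hold : sumR (map J p) = sumR (map J (firstn c p)) + sumR (map J (skipn c p)))
    by (rewrite <- sumR_app, <- map_app, firstn_skipn; reflexivity).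
  assert (Hprefix : sumR (map J (Sseq m j)) = sumR (map Jj (firstn c p))).
  { unfold c, p. rewrite <- (Sseq_prefix m j (n - j)), firstn_map, map_map by auto.
    replace (j + (n - j))%nat with n by (unfold j; lia). reflexivity. }
  assert (Hgain : sumR (map (fun s => Jgain (Wt m W (firstn j s)) (Wt m W s)) (firstn c p))
                  = sumR (map Jp (firstn c p)) + sumR (map Jm (firstn c p))
                    - sumR (map Jj (firstn c p)) - sumR (map J (firstn c p))).
  { rewrite (sumR_map_lin3 _ (fun s => Jp s + Jm s) Jj J 1 (-1) (-1))
      by (intros; unfold Jgain; fold (Jp x) (Jm x) (Jj x) (J x); ring).
    rewrite (sumR_map_lin3 (fun s => Jp s + Jm s) Jp Jm (fun _ => 0) 1 1 0)
      by (intros; ring).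
    ring. }
  rewrite Hnew, Hold, Hprefix, Hgain. ring.
Qed.

Lemma EJ_succ m W n : (1 <= m)%nat ->
  let mu := INR (NN m n) / INR (NN m (S n)) in
  EJ m W (S n) = mu * EJ m W n + (1 - mu) * EJ m W (S n - m)
                 + split_gain m W n / INR (NN m (S n)).
Proof.
  intros Hm mu.
  assert (HN : INR (NN m (S n)) = INR (NN m n) + INR (NN m (S n - m)))
    by (rewrite NN_succ, plus_INR; auto).
  assert (Hpos : 0 < INR (NN m (S n))) by (apply lt_0_INR; pose proof (NN_ge1 m (S n)); lia).
  apply (Rmult_eq_reg_l (INR (NN m (S n)))); [| lra].
  rewrite NN_EJ_succ by auto. unfold mu. rewrite HN in *. field. lra.
Qed.

Theorem lemma1 (m : nat) (W : chan) (n : nat) :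
  (1 <= m)%nat -> valid_chan W -> (1 <= n)%nat ->
  let mu := INR (NN m (n - 1)) / INR (NN m n) in
  EJ m W n >= mu * EJ m W (n - 1) + (1 - mu) * EJ m W (n - m) /\
  (EJ m W n = mu * EJ m W (n - 1) + (1 - mu) * EJ m W (n - m) ->
   forall s : list sign, In s (Sseq m n) ->
     (last s Star = Plus \/ last s Star = Minus) ->
     (Jc (Wt m W (removelast s)) = 0 \/ Jc (Wt m W (removelast s)) = 1) \/
     (Jc (Wt m W (firstn (n - m) s)) = 0 \/ Jc (Wt m W (firstn (n - m) s)) = 1)).
Proof.
  intros Hm HW Hn. destruct n as [|n]; [lia|].
  replace (S n - 1)%nat with n by lia. cbv zeta.
  rewrite (EJ_succ m W n Hm). cbv zeta.
  pose proof (split_gain_ge0 m W n HW) as Hg.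
  assert (Hpos : 0 < INR (NN m (S n))) by (apply lt_0_INR; pose proof (NN_ge1 m (S n)); lia).
  assert (0 <= split_gain m W n / INR (NN m (S n)))
    by (apply Rmult_le_pos; [lra | left; apply Rinv_0_lt_compat, Hpos]).
  split; [lra|]. intros Heq s Hs Hlast.
  assert (Hg0 : split_gain m W n = 0).
  { apply (Rmult_eq_reg_r (/ INR (NN m (S n)))); [| apply Rinv_neq_0_compat; lra].
    rewrite Rmult_0_l. fold (Rdiv (split_gain m W n) (INR (NN m (S n)))). lra. }
  assert (Hin := Sseq_succ_split_in m n s Hs ltac:(destruct Hlast; congruence)).
  assert (Hlen : length s = S n) by exact (Sseq_length_in m (S n) s Hs).
  pose proof (sumR_map_eq0 _ _
    (fun x _ => Jgain_ge0 _ _ (Wt_valid m W _ HW) (Wt_valid m W x HW)) Hg0 _ Hin) as H0.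
  cbv beta in H0. rewrite firstn_removelast in H0 by lia.
  apply Jgain_eq0 in H0; [tauto | apply Wt_valid, HW ..].
Qed.
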